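(* Let $D$ be the private information (e.g. a data mini-batch) taking values in a measurable space $\mathcal{S}$ with base measure $\mu$, with true prior density $f_D$, and let $W$ be the released information taking values in $\mathcal{W}$, produced from $D$ by a protection mechanism with likelihood $f_{W|D}(\cdot\mid\cdot)$ and induced posterior density $f_{D|W}(d\mid w)$. Assume that the attacker's prior belief density $f^{\mathcal{B}}_D$ satisfies $$\frac{f^{\mathcal{B}}_D(d)}{f_D(d)}\in[e^{-\epsilon},e^{\epsilon}]\quad\text{for all } d,$$ for some $\epsilon\ge 0$. Let $\epsilon_{p,m}\ge 0$ and suppose the mechanism guarantees $\epsilon_{p,m}$-maximum Bayesian privacy, i.e. $$\frac{f_{D|W}(d\mid w)}{f_D(d)}\in[e^{-\epsilon_{p,m}},e^{\epsilon_{p,m}}]\quad\text{for all } w\in\mathcal{W},\ d.$$ Then the average Bayesian privacy leakage $\epsilon_{p,a}=\sqrt{\mathrm{JS}(F^{\mathcal{A}}\parallel F^{\mathcal{B}})}$ satisfies $$\epsilon_{p,a}\le\frac{1}{\sqrt{2}}\sqrt{(\epsilon_{p,m}+\epsilon)\left(e^{\epsilon_{p,m}+\epsilon}-1\right)}.$$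
   Context: $F^{\mathcal{B}}$ is the attacker's belief distribution about $D$ before observing the released information, with density $f^{\mathcal{B}}_D$. $F^{\mathcal{A}}$ is the attacker's belief distribution about $D$ after observing the protected released information, with density $f^{\mathcal{A}}_D(d)=\int_{\mathcal{W}} f_{D|W}(d\mid w)\,dP_W(w)$, where $P_W$ is the distribution of the released (protected) information. With $F^{\mathcal{M}}=\tfrac12(F^{\mathcal{A}}+F^{\mathcal{B}})$, the Jensen–Shannon divergence is $\mathrm{JS}(F^{\mathcal{A}}\parallel F^{\mathcal{B}})=\tfrac12[\mathrm{KL}(F^{\mathcal{A}}\parallel F^{\mathcal{M}})+\mathrm{KL}(F^{\mathcal{B}}\parallel F^{\mathcal{M}})]$. The quantity $\epsilon_{p,a}$ is called the average Bayesian privacy (ABP) leakage. *)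

From HB Require Import structures.
From mathcomp Require Import all_boot all_order all_algebra.
From mathcomp Require Import all_classical all_reals all_analysis.
Set Implicit Arguments. Unset Strict Implicit. Unset Printing Implicit Defensive.
Import Order.TTheory GRing.Theory Num.Theory.
Import numFieldNormedType.Exports.
Local Open Scope classical_set_scope.
Local Open Scope ring_scope.

Section Defs.
Context (dS : measure_display) (S : measurableType dS) (R : realType).

Definition is_density (mu : {measure set S -> \bar R}) (f : S -> R) : Prop :=
  [/\ measurable_fun setT f, (forall x, 0 <= f x) &
      (\int[mu]_x (f x)%:E = 1)%E].

(* Kullback-Leibler divergence KL(F || G) of the distributions with
   densities f, g w.r.t. mu (convention 0 * ln 0 = 0) *)
Definition KL (mu : {measure set S -> \bar R}) (f g : S -> R) : \bar R :=
  (\int[mu]_x (f x * ln (f x / g x))%:E)%E.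

Definition JS (mu : {measure set S -> \bar R}) (f g : S -> R) : \bar R :=
  let m := fun x => (f x + g x) / 2 in
  ((2^-1)%:E * (KL mu f m + KL mu g m))%E.

Definition ABP_leakage (mu : {measure set S -> \bar R}) (fA fB : S -> R) : R :=
  Num.sqrt (fine (JS mu fA fB)).
End Defs.

(* attacker's posterior belief density f^A_D(d) = \int f_{D|W}(d|w) dP_W(w) *)
Definition avg_posterior (dW : measure_display) (W : measurableType dW)
  (R : realType) (S : Type) (PW : probability W R) (post : S -> W -> R) :
  S -> R :=
  fun d => fine (\int[PW]_w (post d w)%:E)%E.

(* Let a := epsm + eps.  Averaging over W preserves the posterior bounds, so the
   attacker's beliefs fA and fB lie within factors expR (+-epsm) and
   expR (+-eps) of the true prior fD; hence |ln (fA / fB)| <= a pointwise, and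
   the midpoint m := (fA + fB) / 2 inherits this bound.  Pointwise,
   ln t <= t - 1 gives
     fA ln (fA / m) + fB ln (fB / m) <= (fA - fB)^2 / (fA + fB),
   and the ratio bound gives (fA - fB)^2 <= a (expR a - 1) fA fB, so the
   integrand is at most a (expR a - 1) fB.  Integrating against the density fB
   yields KL(fA || m) + KL(fB || m) <= a (expR a - 1), i.e.
   JS <= a (expR a - 1) / 2. *)

From mathcomp Require Import all_boot all_order all_algebra.
From mathcomp Require Import all_classical all_reals all_analysis.
From mathcomp Require Import measurable_realfun ring lra.
Set Implicit Arguments.
Unset Strict Implicit.
Unset Printing Implicit Defensive.

Import Order.TTheory GRing.Theory Num.Theory.
Local Open Scope ring_scope.

Section LogRatio.
Variable R : realType.
Implicit Types a x A B : R.

Lemma ln_le_subr1 x : 0 < x -> ln x <= x - 1.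
Proof. by move=> x0; have := @le_ln1Dx R (x - 1); rewrite subrKC; apply; lra. Qed.

Lemma norm_ln_le a x : 0 < x -> (`|ln x| <= a) = (expR (- a) <= x <= expR a).
Proof. by move=> x0; rewrite ler_norml -[in RHS](lnK x0) !ler_expR. Qed.

Lemma norm_ln_divC A B : 0 < A -> 0 < B -> `|ln (A / B)| = `|ln (B / A)|.
Proof. by move=> A0 B0; rewrite !ln_div ?posrE // -normrN opprB. Qed.

Lemma norm_ln_div_triangle A B C : 0 < A -> 0 < B -> 0 < C ->
  `|ln (A / C)| <= `|ln (A / B)| + `|ln (B / C)|.
Proof.
move=> A0 B0 C0; rewrite !ln_div ?posrE //.
by rewrite -[ln A - ln C](subrKA (ln B)) ler_normD.
Qed.

Lemma within_expR_div a x y : 0 < y ->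
  (expR (- a) <= x / y <= expR a) = (expR (- a) * y <= x <= expR a * y).
Proof. by move=> y0; rewrite ler_pdivlMr // ler_pdivrMr. Qed.

Lemma norm_ln_div_midpoint A B : 0 < A -> 0 < B ->
  `|ln (A / ((A + B) / 2))| <= `|ln (A / B)|.
Proof.
move=> A0 B0; set m := (A + B) / 2; have m0 : 0 < m by rewrite /m; lra.
rewrite [ln (A / m)]ln_div ?posrE // [ln (A / B)]ln_div ?posrE //.
have [BA|AB] := lerP B A.
- have lnBm : ln B <= ln m by rewrite ler_ln ?posrE // /m; lra.
  have lnmA : ln m <= ln A by rewrite ler_ln ?posrE // /m; lra.
  by rewrite !ger0_norm ?subr_ge0 //; [lra | exact: le_trans lnmA].
- have lnAm : ln A <= ln m by rewrite ler_ln ?posrE // /m; lra.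
  have lnmB : ln m <= ln B by rewrite ler_ln ?posrE // /m; lra.
  by rewrite !ler0_norm ?subr_le0 //; [lra | exact: le_trans lnmB].
Qed.

Lemma sqr_subr_le_ln_ratio a A B : 0 < A -> 0 < B -> `|ln (A / B)| <= a ->
  (A - B) ^+ 2 <= a * (expR a - 1) * (A * B).
Proof.
wlog BA : A B / B <= A => [hwlog A0 B0 hab|A0 B0].
  have [BA|/ltW AB] := lerP B A; first exact: hwlog.
  by rewrite -sqrrN opprB [A * B]mulrC hwlog // -norm_ln_divC.
rewrite norm_ln_le ?divr_gt0 // => /andP[_].
rewrite ler_pdivrMr // => ABa.
have BAa : expR (- a) * A <= B by rewrite expRN ler_pdivrMl // expR_gt0.
have a1 := expR_ge1Dx (- a).
have d1 : A - B <= (expR a - 1) * B by lra.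
(* B >= expR (- a) * A >= (1 - a) * A *)
have d2 : A - B <= a * A by nra.
have -> : a * (expR a - 1) * (A * B) = (a * A) * ((expR a - 1) * B) by ring.
by rewrite expr2 ler_pM // subr_ge0.
Qed.

Lemma mulr_expR_sub1_ge0 a : 0 <= a * (expR a - 1).
Proof.
have [a0|/ltW a0] := leP 0 a.
  by rewrite mulr_ge0 // subr_ge0 -expR0 ler_expR.
by rewrite mulr_le0 // subr_le0 -expR0 ler_expR.
Qed.

Lemma JS_integrand_le_sqr A B : 0 < A -> 0 < B ->
  A * ln (A / ((A + B) / 2)) + B * ln (B / ((A + B) / 2)) <=
  (A - B) ^+ 2 / (A + B).
Proof.
move=> A0 B0; set m := (A + B) / 2; have m0 : 0 < m by rewrite /m; lra.
have lnA := ln_le_subr1 (divr_gt0 A0 m0).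
have lnB := ln_le_subr1 (divr_gt0 B0 m0).
have -> : (A - B) ^+ 2 / (A + B) = A * (A / m - 1) + B * (B / m - 1).
  by rewrite /m; field; lra.
by rewrite lerD // ler_wpM2l // ltW.
Qed.

Lemma JS_integrand_le a A B : 0 < A -> 0 < B -> `|ln (A / B)| <= a ->
  A * ln (A / ((A + B) / 2)) + B * ln (B / ((A + B) / 2)) <=
  a * (expR a - 1) * B.
Proof.
move=> A0 B0 hab; apply: le_trans (JS_integrand_le_sqr A0 B0) _.
have AB0 : 0 < A + B by lra.
rewrite ler_pdivrMr // (le_trans (sqr_subr_le_ln_ratio A0 B0 hab)) //.
by rewrite -[leRHS]mulrA ler_wpM2l ?mulr_expR_sub1_ge0 //; nra.
Qed.

End LogRatio.

Section JensenShannon.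
Context (d : measure_display) (S : measurableType d) (R : realType).
Variable mu : {measure set S -> \bar R}.

Lemma density_integrable (f : S -> R) :
  is_density mu f -> mu.-integrable setT (EFin \o f).
Proof.
case=> mf f0 intf; apply/integrableP; split; first exact/measurable_EFinP.
under eq_integral => x _ do rewrite gee0_abs ?lee_fin //.
by rewrite intf ltry.
Qed.

Lemma integrable_mul_ln_div (f h : S -> R) (a : R) :
  measurable_fun setT f -> measurable_fun setT h ->
  (forall x, 0 < f x) -> (forall x, 0 < h x) ->
  mu.-integrable setT (EFin \o f) ->
  (forall x, `|ln (f x / h x)| <= a) ->
  mu.-integrable setT (fun x => (f x * ln (f x / h x))%:E).
Proof.
move=> mf mh f0 h0 intf fh.
apply: (le_integrable measurableT _ _ (integrableZl measurableT a intf)).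
  apply/measurable_EFinP/measurable_funM => //.
  rewrite (_ : (fun x => ln (f x / h x)) = fun x => ln (f x) - ln (h x)).
    by apply: measurable_funB; apply: measurableT_comp => //;
      exact: measurable_ln.
  by apply/funext => x; rewrite ln_div ?posrE.
move=> x _ /=; rewrite lee_fin !normrM (gtr0_norm (f0 x)) mulrC.
rewrite ler_wpM2r ?(ltW (f0 x)) //.
exact: le_trans (fh x) (ler_norm a).
Qed.

Lemma integrable_le_scale (f g : S -> R) (k : R) :
  measurable_fun setT f -> (forall x, 0 <= f x <= k * g x) ->
  mu.-integrable setT (EFin \o g) -> mu.-integrable setT (EFin \o f).
Proof.
move=> mf fkg intg.
apply: (le_integrable measurableT _ _ (integrableZl measurableT k intg)).
  exact/measurable_EFinP.
move=> x _ /=; have /andP[f0 fk] := fkg x.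
by rewrite lee_fin ger0_norm // ger0_norm ?(le_trans f0).
Qed.

Variables (fA fB : S -> R) (a : R).
Hypotheses (mfA : measurable_fun setT fA) (fA_gt0 : forall x, 0 < fA x).
Hypothesis intfA : mu.-integrable setT (EFin \o fA).
Hypotheses (fB_density : is_density mu fB) (fB_gt0 : forall x, 0 < fB x).
Hypothesis fAB : forall x, `|ln (fA x / fB x)| <= a.

Let mid x := (fA x + fB x) / 2.

Let mid_gt0 x : 0 < mid x.
Proof. by have := fA_gt0 x; have := fB_gt0 x; rewrite /mid; lra. Qed.

Let mmid : measurable_fun setT mid.
Proof.
by case: fB_density => mfB _ _; apply/measurable_funM/measurable_cst/measurable_funD.
Qed.

Let integrable_KL_fA :
  mu.-integrable setT (fun x => (fA x * ln (fA x / mid x))%:E).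
Proof.
apply: (integrable_mul_ln_div (a := a) mfA mmid fA_gt0 mid_gt0 intfA) => x.
exact: le_trans (norm_ln_div_midpoint (fA_gt0 x) (fB_gt0 x)) (fAB x).
Qed.

Let integrable_KL_fB :
  mu.-integrable setT (fun x => (fB x * ln (fB x / mid x))%:E).
Proof.
have [mfB _ _] := fB_density.
apply: (integrable_mul_ln_div (a := a) mfB mmid fB_gt0 mid_gt0
  (density_integrable fB_density)) => x.
rewrite /mid addrC.
apply: le_trans (norm_ln_div_midpoint (fB_gt0 x) (fA_gt0 x)) _.
by rewrite (norm_ln_divC (fB_gt0 x) (fA_gt0 x)).
Qed.

Lemma KL_midpoint_sum_le :
  (KL mu fA mid + KL mu fB mid <= (a * (expR a - 1))%:E)%E.
Proof.
case: fB_density => _ _ intfB.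
rewrite /KL -integralD //.
rewrite -[X in (_ <= X)%E]mule1 -intfB -integralZl //;
  last exact: density_integrable.
apply: le_integral => //; first exact: integrableD.
  exact/integrableZl/density_integrable.
move=> x _; rewrite -EFinD -EFinM lee_fin.
exact: JS_integrand_le (fA_gt0 x) (fB_gt0 x) (fAB x).
Qed.

Lemma ABP_leakage_le_ln_ratio : JS mu fA fB \is a fin_num /\
  ABP_leakage mu fA fB <= (Num.sqrt 2)^-1 * Num.sqrt (a * (expR a - 1)).
Proof.
have JSE : JS mu fA fB = ((2^-1)%:E * (KL mu fA mid + KL mu fB mid))%E by [].
have KL_fin : (KL mu fA mid + KL mu fB mid)%E \is a fin_num.
  by rewrite fin_numD !integrable_fin_num.
split; first by rewrite JSE fin_numM.
have KL_le : fine (KL mu fA mid + KL mu fB mid) <= a * (expR a - 1).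
  by rewrite -lee_fin fineK // KL_midpoint_sum_le.
rewrite /ABP_leakage JSE -(fineK KL_fin) -EFinM /=.
rewrite -sqrtrV // -sqrtrM ?invr_ge0 // ler_sqrt ?ler_wpM2l ?invr_ge0 //.
by rewrite mulr_ge0 ?invr_ge0 ?mulr_expR_sub1_ge0.
Qed.

End JensenShannon.

Section AveragedPosterior.
Context (dS dW : measure_display) (S : measurableType dS) (W : measurableType dW).
Context (R : realType) (PW : probability W R).

Lemma fine_integral_prob_bounds (g : W -> R) (lo hi : R) :
  0 <= lo -> measurable_fun setT g -> (forall w, lo <= g w <= hi) ->
  lo <= fine (\int[PW]_w (g w)%:E)%E <= hi.
Proof.
move=> lo0 mg glohi.
have g0 w : 0 <= g w by have /andP[+ _] := glohi w; exact: le_trans.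
have mEg : measurable_fun setT (EFin \o g) by exact/measurable_EFinP.
have int_lo : (lo%:E <= \int[PW]_w (g w)%:E)%E.
  rewrite -[lo%:E]mule1 -(probability_setT PW) -integral_cst //.
  by apply: ge0_le_integral => // w _; rewrite lee_fin; have /andP[] := glohi w.
have int_hi : (\int[PW]_w (g w)%:E <= hi%:E)%E.
  rewrite -[hi%:E]mule1 -(probability_setT PW) -integral_cst //.
  apply: ge0_le_integral => // w _; rewrite lee_fin ?g0 //.
  by have /andP[] := glohi w.
rewrite -!lee_fin fineK ?int_lo ?int_hi // ge0_fin_numE ?(le_trans _ int_lo) //.
exact: le_lt_trans int_hi (ltry _).
Qed.

Lemma measurable_avg_posterior (post : S -> W -> R) :
  measurable_fun setT (fun p : S * W => post p.1 p.2) ->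
  (forall d w, 0 <= post d w) ->
  measurable_fun setT (avg_posterior PW post).
Proof.
move=> mpost post0; apply: measurableT_comp (fine_measurable measurableT) _.
apply: (measurable_fun_fubini_tonelli_F (fun p => (post p.1 p.2)%:E)).
  exact/measurable_EFinP.
by case=> d w; rewrite lee_fin.
Qed.

Lemma avg_posterior_within (post : S -> W -> R) (fD : S -> R) (e : R) :
  measurable_fun setT (fun p : S * W => post p.1 p.2) ->
  (forall d, 0 <= fD d) ->
  (forall w d, expR (- e) * fD d <= post d w <= expR e * fD d) ->
  forall d, expR (- e) * fD d <= avg_posterior PW post d <= expR e * fD d.
Proof.
move=> mpost fD0 post_within d; apply: fine_integral_prob_bounds => //.
  by rewrite mulr_ge0 // ltW ?expR_gt0.
exact: measurable_fun_pair2 mpost.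
Qed.

End AveragedPosterior.

Theorem theorem1 (dS dW : measure_display) (S : measurableType dS)
  (W : measurableType dW) (R : realType)
  (mu : {measure set S -> \bar R}) (PW : probability W R)
  (fD fB : S -> R) (post : S -> W -> R) (eps epsm : R) :
  0 <= eps -> 0 <= epsm ->
  is_density mu fD -> is_density mu fB ->
  measurable_fun setT (fun p : S * W => post p.1 p.2) ->
  (forall w, is_density mu (fun d => post d w)) ->
  (forall d, expR (- eps) <= fB d / fD d <= expR eps) ->
  (forall w d, expR (- epsm) <= post d w / fD d <= expR epsm) ->
  let fA := avg_posterior PW post in
  JS mu fA fB \is a fin_num /\
  ABP_leakage mu fA fB <=
    (Num.sqrt 2)^-1 * Num.sqrt ((epsm + eps) * (expR (epsm + eps) - 1)).
Proof.
move=> _ _ fD_density fB_density mpost _ hB hP fA.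
have [_ fD_ge0 _] := fD_density.
(* fD d = 0 would give the junk ratio fB d / 0 = 0 < expR (- eps). *)
have fD_gt0 d : 0 < fD d.
  rewrite lt_def fD_ge0 andbT; apply/eqP => fD0.
  by have /andP[+ _] := hB d; rewrite fD0 invr0 mulr0 leNgt expR_gt0.
have expR_fD_gt0 e d : 0 < expR e * fD d by rewrite mulr_gt0 ?expR_gt0.
have fB_within d : expR (- eps) * fD d <= fB d <= expR eps * fD d.
  by rewrite -within_expR_div.
have post_within w d : expR (- epsm) * fD d <= post d w <= expR epsm * fD d.
  by rewrite -within_expR_div.
have fA_within := avg_posterior_within PW mpost fD_ge0 post_within.
have fA_gt0 d : 0 < fA d by case/andP: (fA_within d) => + _; exact: lt_le_trans.
have fB_gt0 d : 0 < fB d by case/andP: (fB_within d) => + _; exact: lt_le_trans.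
have mfA : measurable_fun setT fA.
  apply: measurable_avg_posterior mpost _ => d w.
  by case/andP: (post_within w d) => + _; exact/le_trans/ltW.
have intfA : mu.-integrable setT (EFin \o fA).
  apply: (integrable_le_scale (k := expR epsm) mfA _
    (density_integrable fD_density)) => d.
  by rewrite (ltW (fA_gt0 d)); case/andP: (fA_within d).
apply: ABP_leakage_le_ln_ratio => // d.
apply: le_trans (norm_ln_div_triangle (fA_gt0 d) (fD_gt0 d) (fB_gt0 d)) _.
rewrite (norm_ln_divC (fD_gt0 d) (fB_gt0 d)).
by rewrite lerD // norm_ln_le ?divr_gt0 // within_expR_div.
Qed.
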